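(* Let $m\ge3$ be odd and $n\ge2$. Every completely positive tensor $\mathcal{A}\in S_{m,n}$ is strongly positive semi-definite. Furthermore, suppose $\mathcal{A}=\sum_{l=1}^r(\mathbf{u}^{(l)})^m$ with nonnegative vectors $\mathbf{u}^{(1)},\dots,\mathbf{u}^{(r)}\in\mathbb{R}^n$, and for each $i\in\{1,\dots,n\}$ let $\Gamma_i=\{l\in\{1,\dots,r\}: u^{(l)}_i\ne 0\}$. If the vectors $\{\mathbf{u}^{(l)}: l\in\Gamma_i\}$ span $\mathbb{R}^n$ (i.e. the matrix with these columns has rank $n$) for every $i\in\{1,\dots,n\}$, then $\mathcal{A}$ is strongly positive definite.
   Context: $S_{m,n}$ is the set of real symmetric $m$th order $n$-dimensional tensors. For $\mathbf{u}\in\mathbb{R}^n$, $\mathbf{u}^m$ is the tensor with entries $u_{i_1}\cdots u_{i_m}$. A tensor is completely positive if it equals $\sum_{l=1}^r(\mathbf{u}^{(l)})^m$ for some positive integer $r$ and nonnegative vectors $\mathbf{u}^{(l)}\in\mathbb{R}^n$. For $\mathbf{x}\in\mathbb{R}^n$, $\mathcal{A}\mathbf{x}^{m-1}$ is the vector with $i$th component $\sum_{i_2,\dots,i_m}a_{ii_2\dots i_m}x_{i_2}\cdots x_{i_m}$. For odd $m$, $\mathcal{A}\in S_{m,n}$ is strongly positive semi-definite if $\mathcal{A}\mathbf{x}^{m-1}\ge\mathbf{0}$ componentwise for all $\mathbf{x}\in\mathbb{R}^n$, and strongly positive definite if $\mathcal{A}\mathbf{x}^{m-1}>\mathbf{0}$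 componentwise for all nonzero $\mathbf{x}$. *)

From mathcomp Require Import all_boot all_order all_algebra.
From mathcomp Require Import perm.
Set Implicit Arguments. Unset Strict Implicit. Unset Printing Implicit Defensive.
Import Order.TTheory GRing.Theory Num.Theory.
Local Open Scope ring_scope.

(* A real m-th order n-dimensional tensor: entries indexed by
   (i_1,...,i_m), encoded as a finite function 'I_m -> 'I_n. *)
Definition tensor (R : Type) (m n : nat) := {ffun 'I_m -> 'I_n} -> R.

Definition symmetric_tensor (R : Type) (m n : nat) (A : tensor R m n) : Prop :=
  forall (s : {perm 'I_m}) (f : {ffun 'I_m -> 'I_n}),
    A [ffun k => f (s k)] = A f.

Definition tpow (R : pzRingType) (m n : nat) (u : 'I_n -> R) : tensor R m n :=
  fun f => \prod_(k : 'I_m) u (f k).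
Arguments tpow {R} m {n} u.

Definition tsum_pow (R : pzRingType) (m n r : nat) (u : 'I_r -> 'I_n -> R)
  : tensor R m n := fun f => \sum_(l < r) tpow m (u l) f.
Arguments tsum_pow {R} m {n r} u.

Definition completely_positive (R : numDomainType) (m n : nat)
  (A : tensor R m n) : Prop :=
  exists r : nat, exists u : 'I_r -> 'I_n -> R,
    (0 < r)%N /\ (forall l i, 0 <= u l i) /\ A = tsum_pow m u.

(* (A x^{m-1})_i = sum_{i_2..i_m} a_{i i_2 .. i_m} x_{i_2} ... x_{i_m};
   the first index position is the one with value 0 in 'I_m. *)
Definition tapply (R : pzRingType) (m n : nat) (A : tensor R m n)
  (x : 'I_n -> R) (i : 'I_n) : R :=
  \sum_(f : {ffun 'I_m -> 'I_n} | [forall k : 'I_m, (val k == 0%N) ==> (f k == i)])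
     A f * \prod_(k : 'I_m | val k != 0%N) x (f k).

Definition strongly_psd (R : numDomainType) (m n : nat) (A : tensor R m n) : Prop :=
  forall x : 'I_n -> R, forall i, 0 <= tapply A x i.

Definition strongly_pd (R : numDomainType) (m n : nat) (A : tensor R m n) : Prop :=
  forall x : 'I_n -> R, (exists j, x j != 0) -> forall i, 0 < tapply A x i.

(** For a rank-one tensor [v^m] one computes
    [(v^m x^(m-1))_i = v_i (v.x)^(m-1)], so for [A = sum_l (u^(l))^m]
    the i-th component of [A x^(m-1)] is [sum_l u^(l)_i (u^(l).x)^(m-1)].
    With [m] odd the exponent [m-1] is even, hence every summand is
    nonnegative when the [u^(l)] are.  If the i-th component vanishes, then
    [u^(l).x = 0] for every [l] in [Gamma_i]; since these [u^(l)] span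
    [R^n], this forces [x = 0]. *)

From mathcomp Require Import all_boot all_order all_algebra.
From mathcomp Require Import perm.
Import Order.TTheory GRing.Theory Num.Theory.
Local Open Scope ring_scope.

Lemma big_ffun_head_prod {R : comPzRingType} m' {n} (g : 'I_n -> R) (i : 'I_n) :
  \sum_(f : {ffun 'I_m'.+1 -> 'I_n} | [forall k : 'I_m'.+1, (val k == 0%N) ==> (f k == i)])
     \prod_(k : 'I_m'.+1 | val k != 0%N) g (f k) = (\sum_j g j) ^+ m'.
Proof.
(* Distribute a product of sums whose first factor is the indicator of [i]. *)
pose F (k : 'I_m'.+1) (j : 'I_n) : R := if k == ord0 then (j == i)%:R else g j.
have prod_sumF : \prod_(k < m'.+1) \sum_j F k j = (\sum_j g j) ^+ m'.
  rewrite big_ord_recl /F eqxx (bigD1 i) //= eqxx big1 ?addr0 ?mul1r.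
    by rewrite -[in RHS](card_ord m') -prodr_const.
  by move=> j /negbTE ->.
rewrite -prod_sumF bigA_distr_bigA big_mkcond /=; apply: eq_bigr => f _.
have -> : [forall k : 'I_m'.+1, (val k == 0%N) ==> (f k == i)] = (f ord0 == i).
  apply/forallP/idP => [/(_ ord0) //| /eqP fi k]; apply/implyP => k0.
  have -> : k = ord0 by apply: val_inj; apply/eqP.
  by rewrite fi.
rewrite [RHS](bigD1 ord0) //= /F eqxx.
case: eqP => _; last by rewrite mul0r.
rewrite mul1r; apply: eq_big => // k kn0.
by have /negbTE -> : k != ord0 := kn0.
Qed.

Lemma tapply_tpow (R : comPzRingType) m' n (v x : 'I_n -> R) i :
  tapply (tpow m'.+1 v) x i = v i * (\sum_j v j * x j) ^+ m'.
Proof.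
rewrite /tapply -(big_ffun_head_prod m' (fun j => v j * x j) i) mulr_sumr.
apply: eq_bigr => f /forallP /(_ ord0) /= /eqP f0.
by rewrite /tpow (bigD1 ord0) //= f0 -mulrA big_split.
Qed.

Lemma tapply_tsum_pow (R : pzRingType) m n r (u : 'I_r -> 'I_n -> R) x i :
  tapply (tsum_pow m u) x i = \sum_(l < r) tapply (tpow m (u l)) x i.
Proof.
rewrite /tapply /tsum_pow exchange_big /=.
by apply: eq_bigr => f _; rewrite mulr_suml.
Qed.

Lemma tapply_tpow_ge0 (R : realDomainType) m n (v x : 'I_n -> R) i :
  odd m -> (forall j, 0 <= v j) -> 0 <= tapply (tpow m v) x i.
Proof.
case: m => [//|m'] /= even_m' v_ge0.
by rewrite tapply_tpow mulr_ge0 ?exprn_even_ge0.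
Qed.

Lemma tsum_pow_strongly_psd (R : realDomainType) m n r (u : 'I_r -> 'I_n -> R) :
  odd m -> (forall l i, 0 <= u l i) -> strongly_psd (tsum_pow m u).
Proof.
move=> odd_m u_ge0 x i; rewrite tapply_tsum_pow.
by apply: sumr_ge0 => l _; apply: tapply_tpow_ge0.
Qed.

Lemma spanning_rows_annihilator_eq0 {F : fieldType} {n r} {P : pred 'I_r}
    {u : 'I_r -> 'I_n -> F} {x : 'I_n -> F} :
  \rank (\sum_(l < r | P l) <<\row_(k < n) u l k>>)%MS = n ->
  (forall l, P l -> \sum_j u l j * x j = 0) ->
  forall j, x j = 0.
Proof.
move=> full orth j; pose cx := \col_(k < n) x k.
have rows_in_ker : (\sum_(l < r | P l) <<\row_(k < n) u l k>> <= kermx cx)%MS.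
  apply/sumsmx_subP => l Pl; rewrite genmxE sub_kermx.
  apply/eqP/matrixP => a b; rewrite !mxE (ord1 a) (ord1 b) -[RHS](orth l Pl).
  by apply: eq_bigr => k _; rewrite !mxE.
have : (1%:M <= kermx cx)%MS.
  by apply: submx_trans rows_in_ker; rewrite sub1mx /row_full full.
by rewrite sub_kermx mul1mx => /eqP /matrixP /(_ j 0); rewrite !mxE.
Qed.

Lemma tsum_pow_strongly_pd (R : realFieldType) m n r (u : 'I_r -> 'I_n -> R) :
  odd m -> (forall l i, 0 <= u l i) ->
  (forall i : 'I_n,
     \rank (\sum_(l < r | u l i != 0) <<\row_(k < n) u l k>>)%MS = n) ->
  strongly_pd (tsum_pow m u).
Proof.
case: m => [//|m'] odd_m u_ge0 full x [j xj_neq0] i.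
have terms_ge0 l : 0 <= tapply (tpow m'.+1 (u l)) x i by apply: tapply_tpow_ge0.
rewrite lt_def tsum_pow_strongly_psd // andbT tapply_tsum_pow.
apply: contra xj_neq0 => /eqP /(psumr_eq0P (fun l _ => terms_ge0 l)) terms_eq0.
apply/eqP; apply: (spanning_rows_annihilator_eq0 (full i)) => l uli_neq0.
move: (terms_eq0 l isT); rewrite tapply_tpow.
by move/eqP; rewrite mulf_eq0 (negbTE uli_neq0) expf_eq0 => /andP [_ /eqP].
Qed.

Theorem theorem3p4 (R : realFieldType) (m n : nat) :
  (3 <= m)%N -> odd m -> (2 <= n)%N ->
  (forall A : tensor R m n, symmetric_tensor A ->
     completely_positive A -> strongly_psd A)
  /\
  (forall (r : nat) (u : 'I_r -> 'I_n -> R),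
     (0 < r)%N ->
     (forall l i, 0 <= u l i) ->
     (forall i : 'I_n,
        \rank (\sum_(l < r | u l i != 0) <<\row_(k < n) u l k>>)%MS = n) ->
     strongly_pd (tsum_pow m u)).
Proof.
move=> _ odd_m _; split.
  by move=> A _ [r [u [_ [u_ge0 ->]]]]; apply: tsum_pow_strongly_psd.
by move=> r u _; apply: tsum_pow_strongly_pd.
Qed.
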